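(* Let $\ell>0$ and $\varepsilon\in(0,2)$. There exists a constant $C_p=C_p(\varepsilon,\ell)>0$ such that for every $\alpha\in[0,2-\varepsilon]$ and every $u\in H^1_\alpha(0,\ell)$, $$\int_0^\ell |u|^2\,dx\le C_p\int_0^\ell x^\alpha|\partial_x u|^2\,dx .$$
   Context: For $\ell>0$, the weighted spaces are: for $0\le\alpha<1$, $H^1_\alpha(0,\ell)=\{u\in L^2(0,\ell):\ \int_0^\ell x^\alpha|\partial_x u|^2\,dx<\infty,\ u(0)=u(\ell)=0\}$; for $1\le \alpha<2$, $H^1_\alpha(0,\ell)=\{u\in L^2(0,\ell):\ \int_0^\ell x^\alpha|\partial_x u|^2\,dx<\infty,\ u(\ell)=0\}$. *)

From HB Require Import structures.
From mathcomp Require Import all_boot all_order all_algebra.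
From mathcomp Require Import all_classical all_reals all_analysis.
Set Implicit Arguments. Unset Strict Implicit. Unset Printing Implicit Defensive.
Import Order.TTheory GRing.Theory Num.Theory.
Import numFieldNormedType.Exports.
Local Open Scope classical_set_scope.
Local Open Scope ring_scope.

(* [H1_alpha l alpha u v]: u belongs to the weighted space H^1_alpha(0,l),
   with v : R -> R its (weak) derivative on (0,l).
   - u is locally absolutely continuous on (0,l] with derivative v:
     for 0 < a <= b <= l, v is integrable on [a,b] and u b - u a = int_a^b v;
   - u is in L^2(0,l);
   - int_0^l x^alpha |v|^2 dx < oo;
   - boundary conditions: u(l) = 0, and if 0 <= alpha < 1 also u(0) = 0
     (in the sense of the trace u(0+) = lim_{x -> 0+} u x). *)
Definition H1_alpha (R : realType) (l alpha : R) (u v : R -> R) : Prop :=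
  [/\ measurable_fun `]0%R, l[ u /\ measurable_fun `]0%R, l[ v,
      (forall a b : R, 0 < a -> a <= b -> b <= l ->
         (lebesgue_measure).-integrable `[a, b] (EFin \o v) /\
         ((u b - u a)%:E = \int[lebesgue_measure]_(x in `[a%R, b]) (v x)%:E)%E),
      (\int[lebesgue_measure]_(x in `]0%R, l[) ((u x) ^+ 2)%:E < +oo)%E,
      (\int[lebesgue_measure]_(x in `]0%R, l[) ((x `^ alpha) * (v x) ^+ 2)%:E < +oo)%E
    & u l = 0 /\ (alpha < 1 -> u x @[x --> 0^'+] --> 0)].

From HB Require Import structures.
From mathcomp Require Import all_boot all_order all_algebra.
From mathcomp Require Import all_classical all_reals all_analysis.
From mathcomp Require Import measurable_realfun.
From mathcomp.algebra_tactics Require Import ring lra.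
Import Order.TTheory GRing.Theory Num.Theory.
Import numFieldNormedType.Exports.
Local Open Scope classical_set_scope.
Local Open Scope ring_scope.

(* Put q = alpha / 2 and M = l^(1-q) / (1-q), which bounds the integral of
   t^(-q) over (0, l).  Since u(l) = 0, u(x) = - int_x^l v; writing
   v = (t^q v) t^(-q) and using Cauchy-Schwarz together with
   t^(-2q) <= x^(-q) t^(-q) on [x, l] gives
   u(x)^2 <= M x^(-q) int_0^l t^alpha v^2.
   Integrating in x gives the inequality with constant M^2, and 1 - q >= eps/2
   makes M <= 2 (1 + l) / eps uniformly in alpha.  Only the boundary condition
   u(l) = 0 is used. *)

Section amgm.
Context {R : realFieldType}.

Lemma norm_mul_le_amgm (lam a b : R) : 0 < lam ->
  `|a * b| <= (lam * a ^+ 2 + b ^+ 2 / lam) / 2.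
Proof.
move=> lam_gt0.
rewrite ler_pdivlMr // normrM -(real_normK (num_real a)) -(real_normK (num_real b)).
have -> : lam * `|a| ^+ 2 + `|b| ^+ 2 / lam =
    (lam * `|a| - `|b|) ^+ 2 / lam + `|a| * `|b| * 2.
  by field; rewrite gt_eqF.
by rewrite lerDr divr_ge0 ?sqr_ge0 ?ltW.
Qed.

Lemma sqr_le_mul_of_amgm (a F G : R) : 0 <= a -> 0 <= F -> 0 < G ->
  (forall lam, 0 < lam -> 2 * a <= lam * F + G / lam) -> a ^+ 2 <= F * G.
Proof.
move=> a_ge0 F_ge0 G_gt0 amgm; have [->|a_neq0] := eqVneq a 0.
  by rewrite expr0n /=; exact: mulr_ge0 F_ge0 (ltW G_gt0).
have a_gt0 : 0 < a by rewrite lt_neqAle eq_sym a_neq0.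
have := amgm (G / a) (divr_gt0 G_gt0 a_gt0).
have -> : G / (G / a) = a by field; rewrite !gt_eqF.
move=> amgm_a; have a_le : a <= G / a * F by lra.
by rewrite expr2 -ler_pdivlMr // [F * G]mulrC mulrAC.
Qed.

End amgm.

Section cauchy_schwarz.
Context {d} {T : measurableType d} {R : realType} (mu : {measure set T -> \bar R}).
Variables (D : set T) (f g : T -> R).
Hypotheses (mD : measurable D) (mf : measurable_fun D f) (mg : measurable_fun D g).

Lemma integral_norm_mul_le_sqrt (F G : R) : 0 < G ->
  (\int[mu]_(x in D) (f x ^+ 2)%:E <= F%:E)%E ->
  (\int[mu]_(x in D) (g x ^+ 2)%:E <= G%:E)%E ->
  (\int[mu]_(x in D) `|f x * g x|%:E <= (Num.sqrt (F * G))%:E)%E.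
Proof.
move=> G_gt0 int_f int_g.
have sqrE_ge0 (h : T -> R) x : (0 <= (h x ^+ 2)%:E)%E by rewrite lee_fin sqr_ge0.
have F_ge0 : 0 <= F.
  by rewrite -lee_fin (le_trans _ int_f) //; apply: integral_ge0 => x _.
have msqr (h : T -> R) :
    measurable_fun D h -> measurable_fun D (fun x => (h x ^+ 2)%:E).
  by move=> mh; apply/measurable_EFinP; exact: measurable_funX.
have mf2 := msqr f mf; have mg2 := msqr g mg.
have int_le lam : 0 < lam ->
    (\int[mu]_(x in D) `|f x * g x|%:E <= ((lam * F + G / lam) / 2)%:E)%E.
  move=> lam_gt0.
  have c1_ge0 : 0 <= lam / 2 by rewrite divr_ge0 // ltW.
  have c2_ge0 : 0 <= (2 * lam)^-1 by rewrite invr_ge0 mulr_ge0 // ltW.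
  apply: (@le_trans _ _ (\int[mu]_(x in D)
      ((lam / 2)%:E * (f x ^+ 2)%:E + (2 * lam)^-1%:E * (g x ^+ 2)%:E))%E).
    apply: ge0_le_integral => //.
    - by apply/measurable_EFinP; apply: measurableT_comp => //; exact: measurable_funM.
    - by apply: emeasurable_funD; exact: emeasurable_funM.
    move=> x _; rewrite -!EFinM -EFinD lee_fin.
    rewrite [leRHS](_ : _ = (lam * f x ^+ 2 + g x ^+ 2 / lam) / 2).
      exact: norm_mul_le_amgm.
    by field; rewrite gt_eqF.
  rewrite ge0_integralD ?ge0_integralZl_EFin //;
    do ?[exact: emeasurable_funM | by move=> x _; rewrite mule_ge0].
  apply: le_trans (leeD (lee_wpmul2l _ int_f) (lee_wpmul2l _ int_g)) _; rewrite ?lee_fin //.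
  rewrite [leRHS](_ : _ = lam / 2 * F + (2 * lam)^-1 * G) //.
  by field; rewrite gt_eqF.
have J_ge0 : (0 <= \int[mu]_(x in D) `|f x * g x|%:E)%E by exact: integral_ge0.
have J_fin : (\int[mu]_(x in D) `|f x * g x|%:E)%E \is a fin_num.
  by rewrite ge0_fin_numE // (le_lt_trans (int_le _ ltr01)) ?ltry.
rewrite -(fineK J_fin) lee_fin.
have c_ge0 := fine_ge0 J_ge0.
rewrite -(ger0_norm c_ge0) -sqrtr_sqr ler_sqrt; last by rewrite mulr_ge0 // ltW.
apply: sqr_le_mul_of_amgm => // lam lam_gt0.
by have := int_le lam lam_gt0; rewrite -(fineK J_fin) lee_fin; lra.
Qed.

End cauchy_schwarz.

Section powR_integral.
Context {R : realType}.
Notation mu := (@lebesgue_measure R).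

Lemma integral_itv_powR (p a b : R) : p != -1 -> 0 < a -> a < b ->
  (\int[mu]_(x in `[a, b]) (x `^ p)%:E =
    ((b `^ (p + 1) - a `^ (p + 1)) / (p + 1))%:E)%E.
Proof.
move=> p_neq a_gt0 ab.
have p1_neq0 : p + 1 != 0 by rewrite addr_eq0.
pose F t := (p + 1)^-1 * t `^ (p + 1).
have dF (t : R) : 0 < t ->
    is_derive t 1 F ((p + 1)^-1 * ((p + 1) * t `^ (p + 1 - 1))).
  by move=> t_gt0; exact: is_deriveZ (is_derive1_powR (p + 1) t_gt0).
have F'E (t : R) : 0 < t -> F^`()%classic t = t `^ p.
  by move=> t_gt0; have := dF t t_gt0; rewrite derive1E => -[_ ->]; rewrite mulKf // addrK.
have contF (t : R) : 0 < t -> {for t, continuous F}.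
  by move=> t_gt0; apply/differentiable_continuous/derivable1_diffP; case: (dF t t_gt0).
have cont_pow (t : R) : 0 < t -> {for t, continuous (fun x : R => x `^ p)}.
  move=> t_gt0; apply/differentiable_continuous/derivable1_diffP.
  by case: (is_derive1_powR p t_gt0).
rewrite (@continuous_FTC2 _ _ F) //.
- by rewrite -EFinB /F -mulrBr mulrC.
- apply: continuous_in_subspaceT => x; rewrite inE /= in_itv /= => /andP[ax _].
  exact/cont_pow/(lt_le_trans a_gt0 ax).
- split.
  + move=> x; rewrite in_itv /= => /andP[ax _].
    by case: (dF x (lt_trans a_gt0 ax)).
  + exact/cvg_at_right_filter/contF.
  + exact/cvg_at_left_filter/contF/(lt_trans a_gt0 ab).
- by move=> x; rewrite in_itv /= => /andP[ax _]; rewrite F'E // (lt_trans a_gt0 ax).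
Qed.

Lemma integral_itv0_powR_le (p l : R) : -1 < p -> 0 < l ->
  (\int[mu]_(x in `]0%R, l]) (x `^ p)%:E <= (l `^ (p + 1) / (p + 1))%:E)%E.
Proof.
move=> p_gt l_gt0.
have p1_gt0 : 0 < p + 1 by rewrite -ltrBlDr sub0r.
pose A n := `[l / n.+2%:R, l]%classic.
have lA_gt0 n : 0 < l / n.+2%:R by rewrite divr_gt0.
have A_nd : nondecreasing_seq A.
  apply/nondecreasing_seqP => n; apply/subsetPset/subset_itvr.
  by rewrite bnd_simp ler_pM2l // lef_pV2 ?posrE // ler_nat.
have A_cover : \bigcup_n A n = `]0, l]%classic.
  apply/seteqP; split=> x /=.
    case=> n _; rewrite /A /= !in_itv /= => /andP[lx ->].
    by rewrite (lt_le_trans (lA_gt0 n) lx).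
  rewrite in_itv /= => /andP[x_gt0 xl]; exists (Num.truncn (l / x)) => //.
  rewrite /A /= in_itv /= xl andbT ler_pdivrMr // mulrC -ler_pdivrMr //.
  by rewrite ltW // (lt_trans (truncnS_gt _)) // ltr_nat.
have mpow : measurable_fun setT (fun x : R => (x `^ p)%:E).
  by apply/measurable_EFinP; exact: measurable_powR.
have cvg_A : (\int[mu]_(x in A n) (x `^ p)%:E @[n --> \oo] -->
    \int[mu]_(x in `]0%R, l]) (x `^ p)%:E)%E.
  rewrite -A_cover; apply: ge0_nondecreasing_set_cvg_integral => // n.
  - exact: measurable_itv.
  - exact: measurable_funS mpow.
  - by move=> x _; rewrite lee_fin powR_ge0.
rewrite -(cvg_lim _ cvg_A) //; apply: lime_le; first exact: cvgP cvg_A.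
apply: nearW => n; rewrite integral_itv_powR ?gt_eqF //.
  by rewrite lee_fin ler_pM2r ?invr_gt0 // gerBl powR_ge0.
by rewrite ltr_pdivrMr // ltr_pMr // ltr1n.
Qed.

Lemma integral_itv_sqr_powRN_le (q x l : R) : 0 <= q -> q < 1 -> 0 < x -> x <= l ->
  (\int[mu]_(t in `[x, l]) ((t `^ (- q)) ^+ 2)%:E <=
    (x `^ (- q) * (l `^ (1 - q) / (1 - q)))%:E)%E.
Proof.
move=> q_ge0 q_lt1 x_gt0 xl.
have pow_ge0 (t : R) : (0 <= (t `^ (- q))%:E)%E by rewrite lee_fin powR_ge0.
apply: (@le_trans _ _ (\int[mu]_(t in `[x, l]) ((x `^ (- q))%:E * (t `^ (- q))%:E))%E).
  apply: ge0_le_integral => //.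
  - by move=> t _; rewrite lee_fin sqr_ge0.
  - by apply/measurable_EFinP; apply: measurable_funX; exact: measurable_funTS (measurable_powR _).
  - apply: emeasurable_funM => //.
    by apply/measurable_EFinP; exact: measurable_funTS (measurable_powR _).
  move=> t; rewrite /= in_itv /= => /andP[xt _].
  rewrite -EFinM lee_fin expr2 ler_pM2r ?powR_gt0 ?(lt_le_trans x_gt0 xt) //.
  rewrite !powRN lef_pV2 ?posrE ?powR_gt0 ?(lt_le_trans x_gt0 xt) //.
  by apply: ge0_ler_powR => //; rewrite nnegrE ltW // (lt_le_trans x_gt0 xt).
rewrite ge0_integralZl_EFin ?powR_ge0 //; last first.
  by apply/measurable_EFinP; exact: measurable_funTS (measurable_powR _).
rewrite EFinM lee_wpmul2l ?lee_fin ?powR_ge0 //.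
have Nq_gt : -1 < - q by rewrite ltrN2.
have := integral_itv0_powR_le _ _ Nq_gt (lt_le_trans x_gt0 xl).
rewrite addrC => /(le_trans _); apply; apply: ge0_subset_integral => //.
  by apply/measurable_EFinP; exact: measurable_funTS (measurable_powR _).
by apply: subset_itvr; rewrite bnd_simp.
Qed.

End powR_integral.

Definition poincare_const {R : realType} (l alpha : R) : R :=
  l `^ (1 - alpha / 2) / (1 - alpha / 2).

Section weighted_poincare.
Context {R : realType}.
Notation mu := (@lebesgue_measure R).
Variables (l alpha : R) (u v : R -> R).
Hypotheses (l_gt0 : 0 < l) (alpha_ge0 : 0 <= alpha) (alpha_lt2 : alpha < 2).
Hypotheses (meas_u : measurable_fun `]0%R, l[ u) (meas_v : measurable_fun `]0%R, l[ v).
Hypothesis u_ftc : forall x, 0 < x -> x <= l ->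
  mu.-integrable `[x, l] (EFin \o v) /\
  ((u l - u x)%:E = \int[mu]_(t in `[x, l]) (v t)%:E)%E.
Hypothesis u_l : u l = 0.

Local Notation q := (alpha / 2).

Let q_ge0 : 0 <= q. Proof. by rewrite divr_ge0. Qed.
Let q_lt1 : q < 1. Proof. by rewrite ltr_pdivrMr // mul1r. Qed.

Lemma poincare_const_gt0 : 0 < poincare_const l alpha.
Proof. by rewrite divr_gt0 ?powR_gt0 // subr_gt0. Qed.

Let norm_le_integral_norm x : 0 < x -> x <= l ->
  (`|u x|%:E <= \int[mu]_(t in `[x, l]) `|v t|%:E)%E.
Proof.
move=> x_gt0 xl; have [iv u_int] := u_ftc x x_gt0 xl.
have mv_x : measurable_fun `[x, l] v.
  by apply/measurable_EFinP; exact: measurable_int iv.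
rewrite -normrN -[- u x]add0r -u_l -abse_EFin u_int.
by apply: le_abse_integral => //; exact/measurable_EFinP.
Qed.

Lemma sqr_le_weighted_energy (x E : R) : 0 < x -> x <= l ->
  (\int[mu]_(t in `[x, l]) (t `^ alpha * v t ^+ 2)%:E <= E%:E)%E ->
  u x ^+ 2 <= poincare_const l alpha * E * x `^ (- q).
Proof.
move=> x_gt0 xl int_E.
have mv_x : measurable_fun `[x, l] v.
  by apply/measurable_EFinP; exact: measurable_int (u_ftc x x_gt0 xl).1.
have t_gt0 t : `[x, l]%classic t -> 0 < t.
  by rewrite /= in_itv /= => /andP[xt _]; exact: lt_le_trans xt.
have mpow r : measurable_fun `[x, l] (fun t : R => t `^ r).
  exact: measurable_funTS (measurable_powR _).
have int_f : (\int[mu]_(t in `[x, l]) ((t `^ q * v t) ^+ 2)%:E <= E%:E)%E.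
  under eq_integral do
    rewrite exprMn -powR_mulrn ?powR_ge0 // -powRrM divfK ?pnatr_eq0 //.
  exact: int_E.
have int_g := integral_itv_sqr_powRN_le _ _ _ q_ge0 q_lt1 x_gt0 xl.
have G_gt0 : 0 < x `^ (- q) * (l `^ (1 - q) / (1 - q)).
  by rewrite mulr_gt0 ?powR_gt0 // poincare_const_gt0.
have cs := integral_norm_mul_le_sqrt mu _ _ _ (measurable_itv _)
  (measurable_funM (mpow q) mv_x) (mpow (- q)) _ _ G_gt0 int_f int_g.
have int_v : (\int[mu]_(t in `[x, l]) `|v t|%:E =
    \int[mu]_(t in `[x, l]) `|t `^ q * v t * t `^ (- q)|%:E)%E.
  apply: eq_integral => t /[!inE] /t_gt0 t_pos.
  by rewrite powRN mulrAC mulfV ?mul1r // gt_eqF // powR_gt0.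
have := norm_le_integral_norm x x_gt0 xl.
rewrite int_v => /le_trans /(_ cs); rewrite lee_fin => abs_u.
have E_ge0 : 0 <= E.
  rewrite -lee_fin (le_trans _ int_E) // integral_ge0 // => t _.
  by rewrite lee_fin mulr_ge0 ?powR_ge0 ?sqr_ge0.
rewrite [leRHS](_ : _ = E * (x `^ (- q) * (l `^ (1 - q) / (1 - q)))); last first.
  by rewrite /poincare_const; ring.
rewrite -(real_normK (num_real _)) -[leRHS]sqr_sqrtr; last by rewrite mulr_ge0 // ltW.
by rewrite ler_sqr ?nnegrE ?sqrtr_ge0.
Qed.

Let integral_powRN_le :
  (\int[mu]_(x in `]0%R, l[) (x `^ (- q))%:E <= (poincare_const l alpha)%:E)%E.
Proof.
have Nq_gt : -1 < - q by rewrite ltrN2.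
have := integral_itv0_powR_le _ _ Nq_gt l_gt0; rewrite addrC.
apply: le_trans; apply: ge0_subset_integral => //.
- by apply/measurable_EFinP; exact: measurable_funTS (measurable_powR _).
- by move=> x _; rewrite lee_fin powR_ge0.
- by apply: subset_itvl; rewrite bnd_simp.
Qed.

Lemma weighted_poincare :
  (\int[mu]_(x in `]0%R, l[) (u x ^+ 2)%:E <=
    (poincare_const l alpha ^+ 2)%:E *
    \int[mu]_(x in `]0%R, l[) (x `^ alpha * v x ^+ 2)%:E)%E.
Proof.
have M_gt0 := poincare_const_gt0.
set M := poincare_const l alpha in M_gt0 *.
set E := (\int[mu]_(x in `]0%R, l[) (x `^ alpha * v x ^+ 2)%:E)%E.
have w_ge0 (x : R) : (0 <= (x `^ alpha * v x ^+ 2)%:E)%E.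
  by rewrite lee_fin mulr_ge0 ?powR_ge0 ?sqr_ge0.
have mw : measurable_fun `]0%R, l[ (fun x => (x `^ alpha * v x ^+ 2)%:E).
  apply/measurable_EFinP; apply: measurable_funM; last exact: measurable_funX.
  exact: measurable_funTS (measurable_powR _).
have E_ge0 : (0 <= E)%E by exact: integral_ge0.
have [E_fin|] := boolP (E \is a fin_num); last first.
  rewrite ge0_fin_numE // -leNgt leye_eq => /eqP ->.
  by rewrite gt0_muley ?leey // lte_fin exprn_gt0.
rewrite -(fineK E_fin); set e := fine E.
have u_le x : `]0%R, l[%classic x -> ((u x ^+ 2)%:E <= (M * e)%:E * (x `^ (- q))%:E)%E.
  rewrite /= in_itv /= => /andP[x_gt0 x_lt]; rewrite -EFinM lee_fin.
  have sub_x : `[x, l[ `<=` `]0%R, l[.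
    by move=> t; rewrite /= !in_itv /= => /andP[xt ->]; rewrite (lt_le_trans x_gt0 xt).
  apply: sqr_le_weighted_energy x_gt0 (ltW x_lt) _.
  rewrite /e fineK // -integral_itv_bndo_bndc; last first.
    exact: measurable_funS mw.
  exact: ge0_subset_integral.
have Me_ge0 : 0 <= M * e := mulr_ge0 (ltW M_gt0) (fine_ge0 E_ge0).
apply: le_trans (ge0_le_integral mu _ _ _ _ u_le) _ => //.
- by move=> x _; rewrite lee_fin sqr_ge0.
- by apply/measurable_EFinP; exact: measurable_funX.
- apply: emeasurable_funM => //.
  by apply/measurable_EFinP; exact: measurable_funTS (measurable_powR _).
rewrite ge0_integralZl_EFin //; last 2 first.
- by move=> x _; rewrite lee_fin powR_ge0.
- by apply/measurable_EFinP; exact: measurable_funTS (measurable_powR _).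
apply: le_trans (lee_wpmul2l _ integral_powRN_le) _; first by rewrite lee_fin.
by rewrite -!EFinM lee_fin expr2 mulrAC.
Qed.

End weighted_poincare.

Lemma poincare_const_le {R : realType} (l alpha eps : R) : 0 < l -> 0 <= alpha ->
  0 < eps -> alpha <= 2 - eps -> poincare_const l alpha <= 2 * (1 + l) / eps.
Proof.
move=> l_gt0 alpha_ge0 eps_gt0 alpha_le.
have s_gt0 : 0 < 1 - alpha / 2 by lra.
have pow_le : l `^ (1 - alpha / 2) <= 1 + l.
  have [l_le1|l_gt1] := leP l 1.
    rewrite (le_trans _ (ler_wpDr (ltW l_gt0) (lexx 1))) //.
    have := ge0_ler_powR (ltW s_gt0) (ltW l_gt0 : l \is Num.nneg) ler01 l_le1.
    by rewrite powR1.
  by apply: le_trans (ler1_powR (ltW l_gt1) _) _; lra.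
rewrite /poincare_const [leRHS](_ : _ = (1 + l) * (2 / eps)); last by rewrite mulrA (mulrC 2).
apply: ler_pM; rewrite ?powR_ge0 ?invr_ge0 //; first exact: ltW.
rewrite -[leRHS]invf_div lef_pV2 ?posrE ?divr_gt0 //; lra.
Qed.

Theorem lemma2p2 (R : realType) (l eps : R) (hl : 0 < l) (heps : 0 < eps)
  (heps2 : eps < 2) :
  exists Cp : R, 0 < Cp /\
    forall (alpha : R) (u v : R -> R),
      0 <= alpha -> alpha <= 2 - eps ->
      H1_alpha l alpha u v ->
      (\int[lebesgue_measure]_(x in `]0%R, l[) ((u x) ^+ 2)%:E
        <= Cp%:E * \int[lebesgue_measure]_(x in `]0%R, l[) ((x `^ alpha) * (v x) ^+ 2)%:E)%E.
Proof.
have B_gt0 : 0 < 2 * (1 + l) / eps by rewrite divr_gt0 // mulr_gt0 // addr_gt0.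
exists ((2 * (1 + l) / eps) ^+ 2); split; first exact: exprn_gt0.
move=> alpha u v alpha_ge0 alpha_le [[meas_u meas_v] u_ftc _ _ [u_l _]].
have alpha_lt2 : alpha < 2 by lra.
apply: le_trans (weighted_poincare _ _ _ _ hl alpha_ge0 alpha_lt2 meas_u meas_v
  (fun x x_gt0 xl => u_ftc x l x_gt0 xl (lexx l)) u_l) _.
apply: lee_wpmul2r.
  by apply: integral_ge0 => x _; rewrite lee_fin mulr_ge0 ?powR_ge0 ?sqr_ge0.
rewrite lee_fin ler_sqr ?nnegrE; first exact: poincare_const_le.
  exact/ltW/poincare_const_gt0.
exact: ltW.
Qed.
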